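(* With the notation below, let $f,g\in\mathcal K(C_p)$ be real-valued. (i) $\|f\vee g\|_p\leq\max\{\|f\|_p,\|g\|_p\}$. (ii) $\|f+g\|_p\leq\max\{\|f\|_p,\|g\|_p\}$. (iii) $\|p^af\|_p=p^{-a}\|f\|_p$ for $a\in\mathbb{Z}$. (iv) $\|f\|_p\leq1$ if and only if the restriction of $f$ to $[1,p]$ has integral slopes. (v) For $D\in\mathrm{Div}(C_p)$, the sets $H^0(D)^\rho=\{f\in H^0(D)\mid\|f\|_p\leq\rho\}$ ($\rho>0$) form an increasing filtration of $H^0(D)$ by $\mathbb{R}_{\max}$-submodules.
   Context: Let $p$ be a prime, $H_p=\mathbb{Z}[1/p]$, $|\cdot|_p$ the $p$-adic absolute value on $H_p$ normalized by $|p|_p=1/p$. $C_p$ is the set of subgroups $H=\lambda H_p\subset\mathbb{R}$, $\lambda>0$. $\mathcal K(C_p)$: continuous piecewise affine $f:(0,\infty)\to\mathbb{R}$ with slopes in $H_p$ and $f(p\lambda)=f(\lambda)$, plus the constant $-\infty$; it is a semifield for $\vee=\max$ and $+$, and an $\mathbb{R}_{\max}$-module ($\mathbb{R}_{\max}=\mathbb{R}\cup\{-\infty\}$ with operations max and $+$) via $\vee$ and addition of constants. For real-valued $f$, $\|f\|_p=\max\{|h|_p/\lambda\}$ over $\lambda\in(0,\infty)$ and $h$ ranging over the left and right slopes of $f$ at $\lambda$. Divisors: maps $D$ with $D(H)\in H$ for $H\in C_p$, zero for all but finitely many $H$, ordered pointwise; principal divisor $(f)(H)=h_+-h_-$ for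 $H=\lambda H_p$, with $h_\pm=\lim_{\epsilon\to0\pm}(f((1+\epsilon)\lambda)-f(\lambda))/\epsilon$. $H^0(D)=\{f\in\mathcal K(C_p)\text{ real-valued}\mid D+(f)\geq0\}\cup\{-\infty\}$, the element $-\infty$ being included in every $H^0(D)^\rho$. *)

From HB Require Import structures.
From mathcomp Require Import all_boot all_order all_algebra.
From mathcomp Require Import all_classical all_reals all_analysis.
Set Implicit Arguments. Unset Strict Implicit. Unset Printing Implicit Defensive.
Import Order.TTheory GRing.Theory Num.Theory.
Import numFieldNormedType.Exports.
Local Open Scope classical_set_scope.
Local Open Scope ring_scope.

Section Defs.
Variable R : realType.
Variable p : nat.

Definition inHp (h : R) : Prop :=
  exists (a : int) (k : nat), h = a%:~R / (p%:R) ^+ k.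

Definition padic_abs (h : R) : R :=
  if h == 0 then 0 else
  sup [set (p%:R : R) ^ (- n) | n in
        [set n : int | exists a : int, ~~ (p%:Z %| a)%Z /\ h = a%:~R * (p%:R) ^ n]].

Definition lamHp (lam : R) : set R := [set lam * h | h in [set h | inHp h]].

Definition Cp : set (set R) := [set H | exists lam : R, 0 < lam /\ H = lamHp lam].

Definition inK (f : R -> R) : Prop :=
  (forall x : R, 0 < x -> {for x, continuous f}) /\
  (forall a b : R, 0 < a -> a <= b ->
     exists (n : nat) (x : nat -> R),
       x 0%N = a /\ x n = b /\
       (forall i, (i < n)%N -> x i < x i.+1) /\
       (forall i, (i < n)%N -> exists h c : R, inHp h /\
          forall t, x i <= t <= x i.+1 -> f t = h * t + c)) /\
  (forall lam : R, 0 < lam -> f (p%:R * lam) = f lam).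

Definition rslope (f : R -> R) (lam : R) : R :=
  lim ((fun t : R => (f (lam + t) - f lam) / t) @ 0^'+).
Definition lslope (f : R -> R) (lam : R) : R :=
  lim ((fun t : R => (f (lam + t) - f lam) / t) @ 0^'-).

Definition normp (f : R -> R) : R :=
  sup [set r : R | exists lam h : R, 0 < lam /\
        (h = rslope f lam \/ h = lslope f lam) /\ r = padic_abs h / lam].

Definition hplus (f : R -> R) (lam : R) : R :=
  lim ((fun e : R => (f ((1 + e) * lam) - f lam) / e) @ 0^'+).
Definition hminus (f : R -> R) (lam : R) : R :=
  lim ((fun e : R => (f ((1 + e) * lam) - f lam) / e) @ 0^'-).
(* (f)(lam H_p) = h_+ - h_- (computed at any representative lam > 0) *)
Definition pdiv (f : R -> R) (lam : R) : R := hplus f lam - hminus f lam.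

(* divisors: D : C_p -> R, D(H) in H, finitely supported
   (represented as maps on set R; values outside C_p are irrelevant) *)
Definition isDiv (D : set R -> R) : Prop :=
  (forall lam : R, 0 < lam -> lamHp lam (D (lamHp lam))) /\
  finite_set [set H | Cp H /\ D H != 0].

(* elements of K(C_p): None is the constant -oo, Some f a real-valued f *)
Definition Kelt := option (R -> R).

(* R_max = R u {-oo}, None = -oo *)
Definition Rmax := option R.

Definition Kjoin (x y : Kelt) : Kelt :=
  match x, y with
  | None, _ => y
  | _, None => x
  | Some f, Some g => Some (fun t => Num.max (f t) (g t))
  end.

Definition Kact (c : Rmax) (x : Kelt) : Kelt :=
  match c, x with
  | Some r, Some f => Some (fun t => r + f t)
  | _, _ => None
  end.

Definition Rmax_submodule (S : set Kelt) : Prop :=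
  S None /\ (forall x y, S x -> S y -> S (Kjoin x y)) /\
  (forall c x, S x -> S (Kact c x)).

Definition H0 (D : set R -> R) : set Kelt := fun x =>
  match x with
  | None => True
  | Some f => inK f /\ forall lam : R, 0 < lam -> 0 <= D (lamHp lam) + pdiv f lam
  end.

Definition H0rho (D : set R -> R) (rho : R) : set Kelt := fun x =>
  match x with
  | None => True
  | Some f => H0 D (Some f) /\ normp f <= rho
  end.

End Defs.

(* Every f in K(C_p) is, on each side of each point, affine with slope in H_p, and
   f(pλ) = f(λ) turns a right slope h at λ into the right slope h/p at pλ.  Since
   |h/p|_p / (pλ) = |h|_p / λ, the ratio |f'_+(λ)|_p / λ is invariant under λ ↦ pλ, so it is
   bounded by the finitely many slopes of f on [1, p].  A left slope at λ is a right slope at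
   points slightly below λ, where the ratio is larger, so right slopes alone determine ||f||_p.
   Then (i)-(iii) are pointwise statements on right slopes: the right slope of f ∨ g is one of
   those of f and g, that of f + g is their sum (ultrametric inequality), and that of p^a f is
   p^a times that of f.  (iv) holds because an element h of H_p with |h|_p < p is an integer.
   For (v), K(C_p) is closed under ∨ and under adding constants, and where f ≥ g the function f
   touches f ∨ g from below, so (f) ≤ (f ∨ g) there. *)

From Pilot Require Import Defs.
From HB Require Import structures.
From mathcomp Require Import all_boot all_order all_algebra.
From mathcomp Require Import all_classical all_reals all_analysis.
From mathcomp Require Import ring lra zify.
Import Order.TTheory GRing.Theory Num.Theory.
Import numFieldNormedType.Exports.
Local Open Scope classical_set_scope.
Local Open Scope ring_scope.
Set Implicit Arguments. Unset Strict Implicit. Unset Printing Implicit Defensive.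

(** * Affine germs and one-sided slopes *)

Section AffinePieces.
Variable R : realType.
Implicit Types (f g : R -> R) (a b x h k : R).

Definition affine_on f a b h := exists c, forall t, a <= t <= b -> f t = h * t + c.
Definition right_affine f x h := exists2 b, x < b & affine_on f x b h.
Definition left_affine f x h := exists2 a, a < x & affine_on f a x h.

Lemma affine_on_sub f a b a' b' h :
  a <= a' -> b' <= b -> affine_on f a b h -> affine_on f a' b' h.
Proof.
move=> aa' b'b [c fE]; exists c => t /andP [t1 t2].
by apply: fE; rewrite (le_trans aa' t1) (le_trans t2 b'b).
Qed.

Lemma right_affine2 f g x h k : right_affine f x h -> right_affine g x k ->
  exists2 b, x < b & affine_on f x b h /\ affine_on g x b k.
Proof.
move=> [b1 xb1 Af] [b2 xb2 Ag]; exists (Num.min b1 b2); first by rewrite lt_min xb1.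
by split; [apply: affine_on_sub Af | apply: affine_on_sub Ag]; rewrite ?ge_min ?lexx ?orbT.
Qed.

Lemma left_affine2 f g x h k : left_affine f x h -> left_affine g x k ->
  exists2 a, a < x & affine_on f a x h /\ affine_on g a x k.
Proof.
move=> [a1 a1x Af] [a2 a2x Ag]; exists (Num.max a1 a2); first by rewrite gt_max a1x.
by split; [apply: affine_on_sub Af | apply: affine_on_sub Ag]; rewrite ?le_max ?lexx ?orbT.
Qed.

Lemma affine_onD f g a b h k : affine_on f a b h -> affine_on g a b k ->
  affine_on (fun t => f t + g t) a b (h + k).
Proof.
by move=> [c fE] [d gE]; exists (c + d) => t tab; rewrite fE ?gE //; ring.
Qed.

Lemma affine_onZ r f a b h : affine_on f a b h -> affine_on (fun t => r * f t) a b (r * h).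
Proof. by move=> [c fE]; exists (r * c) => t tab; rewrite fE //; ring. Qed.

Lemma right_affineD f g x h k : right_affine f x h -> right_affine g x k ->
  right_affine (fun t => f t + g t) x (h + k).
Proof.
by move=> rf rg; have [b xb [Af Ag]] := right_affine2 rf rg; exists b; last exact: affine_onD.
Qed.

Lemma left_affineD f g x h k : left_affine f x h -> left_affine g x k ->
  left_affine (fun t => f t + g t) x (h + k).
Proof.
by move=> lf lg; have [a ax [Af Ag]] := left_affine2 lf lg; exists a; last exact: affine_onD.
Qed.

Lemma right_affineZ r f x h : right_affine f x h -> right_affine (fun t => r * f t) x (r * h).
Proof. by move=> [b xb Af]; exists b; last exact: affine_onZ. Qed.

Lemma left_affineZ r f x h : left_affine f x h -> left_affine (fun t => r * f t) x (r * h).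
Proof. by move=> [a ax Af]; exists a; last exact: affine_onZ. Qed.

Lemma affine_on_dilate f q a b h : 0 < q -> 0 < a ->
  (forall t, 0 < t -> f (q * t) = f t) ->
  affine_on f a b h -> affine_on f (q * a) (q * b) (q^-1 * h).
Proof.
move=> q0 a0 fq [c fE]; exists c => t /andP [t1 t2].
have t0 : 0 < t / q by rewrite divr_gt0 // (lt_le_trans _ t1) ?mulr_gt0.
rewrite -[t](divfK (lt0r_neq0 q0)) mulrC fq // fE; first by field; exact: lt0r_neq0.
by rewrite ler_pdivlMr // ler_pdivrMr // ![_ * q]mulrC t1 t2.
Qed.

Lemma affine_on_max_l f g a b h : (forall t, a <= t <= b -> g t <= f t) ->
  affine_on f a b h -> affine_on (fun t => Num.max (f t) (g t)) a b h.
Proof. by move=> gf [c fE]; exists c => t tab; rewrite max_l ?gf // fE. Qed.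

Lemma affine_on_max_r f g a b h : (forall t, a <= t <= b -> f t <= g t) ->
  affine_on g a b h -> affine_on (fun t => Num.max (f t) (g t)) a b h.
Proof. by move=> fg [c gE]; exists c => t tab; rewrite max_r ?fg // gE. Qed.

Lemma rslope_right_affine f x h : right_affine f x h -> rslope f x = h.
Proof.
move=> [b xb [c fE]]; apply: norm_lim_near_cst; near=> t.
have t0 : 0 < t by near: t; exact: nbhs_right_gt.
have tb : t < b - x by near: t; apply: nbhs_right_lt; rewrite subr_gt0.
rewrite !fE; first by field; exact: lt0r_neq0.
all: by apply/andP; split; lra.
Unshelve. all: by end_near.
Qed.

Lemma lslope_left_affine f x h : left_affine f x h -> lslope f x = h.
Proof.
move=> [a ax [c fE]]; apply: norm_lim_near_cst; near=> t.
have t0 : t < 0 by near: t; exact: nbhs_left_lt.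
have ta : a - x < t by near: t; apply: nbhs_left_gt; rewrite subr_lt0.
rewrite !fE; first by field; exact: ltr0_neq0.
all: by apply/andP; split; lra.
Unshelve. all: by end_near.
Qed.

Lemma left_affine_rslope f x h : left_affine f x h ->
  exists2 m, m < x & forall mu, m <= mu < x -> rslope f mu = h.
Proof.
move=> [a ax A]; exists a => // mu /andP [amu mux].
by apply: rslope_right_affine; exists x => //; exact: affine_on_sub amu (lexx x) A.
Qed.

Lemma hplus_right_affine f x h : 0 < x -> right_affine f x h -> hplus f x = h * x.
Proof.
move=> x0 [b xb [c fE]]; apply: norm_lim_near_cst; near=> e.
have e0 : 0 < e by near: e; exact: nbhs_right_gt.
have eb : e < (b - x) / x by near: e; apply: nbhs_right_lt; rewrite divr_gt0 ?subr_gt0.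
have ebx : e * x < b - x by rewrite -ltr_pdivlMr.
rewrite !fE; first by field; exact: lt0r_neq0.
all: by apply/andP; split; nra.
Unshelve. all: by end_near.
Qed.

Lemma hminus_left_affine f x h : 0 < x -> left_affine f x h -> hminus f x = h * x.
Proof.
move=> x0 [a ax [c fE]]; apply: norm_lim_near_cst; near=> e.
have e0 : e < 0 by near: e; exact: nbhs_left_lt.
have ea : (a - x) / x < e by near: e; apply: nbhs_left_gt; rewrite ltr_pdivrMr ?mul0r ?subr_lt0.
have eax : a - x < e * x by rewrite -ltr_pdivrMr.
rewrite !fE; first by field; exact: ltr0_neq0.
all: by apply/andP; split; nra.
Unshelve. all: by end_near.
Qed.

Lemma affine_on_slope_le f g a b h k : a < b -> affine_on f a b h -> affine_on g a b k ->
  f b - f a <= g b - g a -> h <= k.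
Proof. by move=> ab [c fE] [d gE]; rewrite !fE ?gE ?lexx ?(ltW ab) //; nra. Qed.

(* Two of the three points a, (a + b) / 2, b lie on the same branch, and two points fix
   the slope. *)
Lemma affine_pick a b s c h1 c1 h2 c2 : a < b ->
  (forall t, a <= t <= b -> s * t + c = h1 * t + c1 \/ s * t + c = h2 * t + c2) ->
  s = h1 \/ s = h2.
Proof.
move=> ab E.
have line u v h d : u < v -> s * u + c = h * u + d -> s * v + c = h * v + d -> s = h.
  move=> uv Eu Ev; have : (s - h) * (v - u) = 0 by nra.
  by move/eqP; rewrite mulf_eq0 !subr_eq0 (gt_eqF uv) orbF => /eqP.
pose m := (a + b) / 2; have am : a < m by rewrite /m; lra.
have mb : m < b by rewrite /m; lra.
have /E Ea : a <= a <= b by rewrite lexx ltW.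
have /E Em : a <= m <= b by rewrite !ltW.
have /E Eb : a <= b <= b by rewrite lexx ltW.
case: Ea => Ea; case: Em => Em; case: Eb => Eb;
  solve [ left; exact: line Ea Em | left; exact: line Ea Eb | left; exact: line Em Eb
        | right; exact: line Ea Em | right; exact: line Ea Eb | right; exact: line Em Eb ].
Qed.

Lemma right_affine_pick f g M x h1 h2 s : (forall t, M t = f t \/ M t = g t) ->
  right_affine f x h1 -> right_affine g x h2 -> right_affine M x s -> s = h1 \/ s = h2.
Proof.
move=> Mfg rf rg [bM xbM [c ME]].
have [b xb [[c1 fE] [c2 gE]]] := right_affine2 rf rg.
apply: (@affine_pick x (Num.min b bM) s c h1 c1 h2 c2); first by rewrite lt_min xb.
move=> t /andP [xt]; rewrite le_min => /andP [tb tbM].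
by rewrite -ME ?xt // -fE ?xt // -gE ?xt.
Qed.

Lemma rslope_shift r f : rslope (fun t => r + f t) = rslope f.
Proof.
apply/funext => x; rewrite /rslope (_ : (fun t => _) = fun t => (f (x + t) - f x) / t) //.
by apply/funext => t; rewrite opprD addrACA subrr add0r.
Qed.

Lemma lslope_shift r f : lslope (fun t => r + f t) = lslope f.
Proof.
apply/funext => x; rewrite /lslope (_ : (fun t => _) = fun t => (f (x + t) - f x) / t) //.
by apply/funext => t; rewrite opprD addrACA subrr add0r.
Qed.

Lemma pdiv_shift r f : Defs.pdiv (fun t => r + f t) = Defs.pdiv f.
Proof.
apply/funext => x; rewrite /Defs.pdiv /hplus /hminus.
rewrite (_ : (fun e => _) = fun e => (f ((1 + e) * x) - f x) / e) //.
by apply/funext => e; rewrite opprD addrACA subrr add0r.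
Qed.

End AffinePieces.

(** * Piecewise affine functions *)

Section PiecewiseAffine.
Variables (R : realType) (p : nat).
Implicit Types (f g : R -> R) (a b m x h k : R).

Inductive pw_affine (f : R -> R) : R -> R -> Prop :=
| pw_affine_nil a : pw_affine f a a
| pw_affine_cons a m b h : a < m -> inHp p h -> affine_on f a m h ->
    pw_affine f m b -> pw_affine f a b.

Lemma pw_affineP f a b :
  (exists (n : nat) (x : nat -> R), x 0%N = a /\ x n = b /\
     (forall i, (i < n)%N -> x i < x i.+1) /\
     (forall i, (i < n)%N -> exists h c : R, inHp p h /\
        forall t, x i <= t <= x i.+1 -> f t = h * t + c))
  <-> pw_affine f a b.
Proof.
split.
  move=> [n [x [<- [<- [xinc xaff]]]]].
  elim: n x xinc xaff => [|n IH] x xinc xaff; first exact: pw_affine_nil.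
  have [h [c [Hh fE]]] := xaff 0%N isT.
  apply: (pw_affine_cons (xinc 0%N isT) Hh); first by exists c.
  by apply: (IH (fun i => x i.+1)) => i lt; [exact: xinc | exact: xaff].
elim=> [a'|a' m b' h am Hh [c fE] _ [n [x [x0 [xn [xinc xaff]]]]]].
  by exists 0%N, (fun=> a'); do 3!split => // i; rewrite ltn0.
exists n.+1, (fun i => if i is i'.+1 then x i' else a'); do 3!split => //.
  by case=> [|i] /= lt; [rewrite x0 | exact: xinc].
by case=> [|i] /= lt; [exists h, c; rewrite x0 | exact: xaff].
Qed.

Lemma pw_affine_le f a b : pw_affine f a b -> a <= b.
Proof. by elim=> // a' m b' h /ltW am _ _ _; exact: le_trans. Qed.

Lemma pw_affine_piece f a b h : a <= b -> inHp p h -> affine_on f a b h -> pw_affine f a b.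
Proof.
rewrite le_eqVlt => /orP [/eqP <- _ _|ab Hh A]; first exact: pw_affine_nil.
exact: pw_affine_cons ab Hh A (pw_affine_nil f b).
Qed.

Lemma pw_affine_cat f a m b : pw_affine f a m -> pw_affine f m b -> pw_affine f a b.
Proof. by elim=> // a' m' b' h am Hh A _ IH /IH; exact: pw_affine_cons am Hh A. Qed.

Lemma pw_affine_split f a b m : pw_affine f a b -> a <= m -> m <= b ->
  pw_affine f a m /\ pw_affine f m b.
Proof.
move=> pf; elim: pf m => [a' m am ma|a' m' b' h am' Hh A pf IH m am mb].
  have -> : m = a' by apply/eqP; rewrite eq_le ma am.
  by split; exact: pw_affine_nil.
have [mm'|m'm] := leP m m'.
  split; first exact: pw_affine_piece am Hh (affine_on_sub (lexx a') mm' A).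
  exact: pw_affine_cat (pw_affine_piece mm' Hh (affine_on_sub am (lexx m') A)) pf.
have [pf1 pf2] := IH m (ltW m'm) mb.
by split => //; exact: pw_affine_cons am' Hh A pf1.
Qed.

Lemma pw_affine_right f a b x : pw_affine f a b -> a <= x < b ->
  exists2 h, inHp p h & right_affine f x h.
Proof.
elim=> [a'|a' m b' h am Hh A _ IH] /andP [ax xb].
  by move: (le_lt_trans ax xb); rewrite ltxx.
have [xm|mx] := ltP x m; last by apply: IH; rewrite mx.
by exists h => //; exists m => //; exact: affine_on_sub ax (lexx m) A.
Qed.

Lemma pw_affine_left f a b x : pw_affine f a b -> a < x <= b ->
  exists h, left_affine f x h.
Proof.
elim=> [a'|a' m b' h am Hh A _ IH] /andP [ax xb].
  by move: (lt_le_trans ax xb); rewrite ltxx.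
have [xm|mx] := leP x m; last by apply: IH; rewrite mx.
by exists h, a' => //; exact: affine_on_sub (lexx a') xm A.
Qed.

Lemma pw_affine_rslope_bound f a b : pw_affine f a b ->
  exists M, forall x, a <= x < b -> padic_abs p (rslope f x) <= M.
Proof.
elim=> [a'|a' m b' h am Hh A _ [M HM]].
  by exists 0 => x /andP [ax xb]; move: (le_lt_trans ax xb); rewrite ltxx.
exists (Num.max (padic_abs p h) M) => x /andP [ax xb].
have [xm|mx] := ltP x m; last by rewrite le_max HM ?orbT // mx.
rewrite (@rslope_right_affine _ _ _ h) ?le_max ?lexx //.
by exists m => //; exact: affine_on_sub ax (lexx m) A.
Qed.

Lemma pw_affine_max2 f g a b h k : a <= b -> inHp p h -> inHp p k ->
  affine_on f a b h -> affine_on g a b k -> pw_affine (fun t => Num.max (f t) (g t)) a b.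
Proof.
wlog kh : f g h k / k <= h => [W ab Hh Hk Af Ag|].
  have [kh|/ltW hk] := leP k h; first exact: (W f g h k).
  rewrite (_ : (fun t => _) = fun t => Num.max (g t) (f t)); first exact: (W g f k h).
  by apply/funext => t; rewrite maxC.
move=> ab Hh Hk [c fE] [d gE].
have [Da|Da] := leP 0 ((h - k) * a + (c - d)).
  apply: pw_affine_piece ab Hh (affine_on_max_l _ (ex_intro _ c fE)).
  by move=> t /andP [t1 t2]; rewrite fE ?gE ?t1 ?t2 //; nra.
have [Db|Db] := leP ((h - k) * b + (c - d)) 0.
  apply: pw_affine_piece ab Hk (affine_on_max_r _ (ex_intro _ d gE)).
  by move=> t /andP [t1 t2]; rewrite fE ?gE ?t1 ?t2 //; nra.
have hk : 0 < h - k by nra.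
pose m := (d - c) / (h - k).
have mE : (h - k) * m = d - c by rewrite /m mulrC divfK ?gt_eqF.
have am : a <= m by nra.
have mb : m <= b by nra.
apply: (@pw_affine_cat _ _ m).
  apply: pw_affine_piece am Hk (affine_on_max_r _ (ex_intro _ d _)).
    by move=> t /andP [t1 t2]; rewrite fE ?gE ?t1 ?(le_trans t2 mb) //; nra.
  by move=> t /andP [t1 t2]; rewrite gE ?t1 ?(le_trans t2 mb).
apply: pw_affine_piece mb Hh (affine_on_max_l _ (ex_intro _ c _)).
  by move=> t /andP [t1 t2]; rewrite fE ?gE ?t2 ?(le_trans am t1) //; nra.
by move=> t /andP [t1 t2]; rewrite fE ?t2 ?(le_trans am t1).
Qed.

Lemma pw_affine_max_affine f g a b h : inHp p h -> affine_on f a b h -> pw_affine g a b ->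
  pw_affine (fun t => Num.max (f t) (g t)) a b.
Proof.
move=> Hh Af pg; elim: pg Af => [a'|a' m b' k am Hk Ag pg IH] Af; first exact: pw_affine_nil.
apply: (@pw_affine_cat _ _ m); last exact/IH/(affine_on_sub (ltW am) (lexx b') Af).
exact: pw_affine_max2 (ltW am) Hh Hk (affine_on_sub (lexx a') (pw_affine_le pg) Af) Ag.
Qed.

Lemma pw_affine_max f g a b : pw_affine f a b -> pw_affine g a b ->
  pw_affine (fun t => Num.max (f t) (g t)) a b.
Proof.
elim=> [a'|a' m b' h am Hh Af pf IH] pg; first exact: pw_affine_nil.
have [pg1 pg2] := pw_affine_split pg (ltW am) (pw_affine_le pf).
exact: pw_affine_cat (pw_affine_max_affine Hh Af pg1) (IH pg2).
Qed.

Lemma pw_affine_shift r f a b : pw_affine f a b -> pw_affine (fun t => r + f t) a b.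
Proof.
elim=> [a'|a' m b' h am Hh [c fE] _ IH]; first exact: pw_affine_nil.
by apply: pw_affine_cons am Hh _ IH; exists (r + c) => t tam; rewrite fE //; ring.
Qed.

End PiecewiseAffine.

(** * The p-adic absolute value and the functions of K(C_p) *)

Lemma ln_exprz (R : realType) (x : R) (k : int) : 0 < x -> ln (x ^ k) = k%:~R * ln x.
Proof.
move=> x0; case: k => n; first by rewrite lnXn // -mulr_natl.
by rewrite NegzE -exprnN lnV ?posrE ?exprn_gt0 // lnXn // rmorphN /= mulNr -mulr_natl.
Qed.

Section PadicNorm.
Variables (R : realType) (p : nat).
Hypothesis p_prime : prime p.
Local Notation P := (p%:R : R).
Implicit Types (f g : R -> R) (x : R) (D : set R -> R) (rho : R) (u v : Kelt R).

Lemma P_gt1 : 1 < P. Proof. by rewrite ltr1n prime_gt1. Qed.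
Lemma P_gt0 : 0 < P. Proof. exact: lt_trans ltr01 P_gt1. Qed.
Lemma P_neq0 : P != 0. Proof. by rewrite gt_eqF // P_gt0. Qed.

Lemma P_exprz_nat (n : nat) : P ^ n = (p%:Z ^+ n)%:~R.
Proof. by rewrite rmorphXn /= -pmulrn. Qed.

Lemma int_pfactor (a : int) : a != 0 ->
  exists (c : int) (v : nat), ~~ (p%:Z %| c)%Z /\ a = c * p%:Z ^+ v.
Proof.
move=> a0; have [|m pm aE] := pfactor_coprime (n := `|a|) p_prime; first by rewrite absz_gt0.
exists ((-1) ^+ (a < 0)%R * m%:Z), (logn p `|a|); split.
  by rewrite dvdzE abszMsign -prime_coprime.
by rewrite -mulrA -[p%:Z]natz -natrX -[m%:Z]natz -natrM -aE natz -intEsign.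
Qed.

Lemma inHp_pfactor (h : R) : inHp p h -> h != 0 ->
  exists (a n : int), ~~ (p%:Z %| a)%Z /\ h = a%:~R * P ^ n.
Proof.
move=> [a [k ->]] h0; have /int_pfactor [c [v [pc aE]]] : a != 0.
  by apply: contraNneq h0 => ->; rewrite mul0r.
exists c, (v%:Z - k%:Z); split => //.
by rewrite aE rmorphM /= -P_exprz_nat expfzDr ?P_neq0 // mulrA exprnN.
Qed.

Lemma pfactor_exponent_uniq (a b n m : int) : ~~ (p%:Z %| a)%Z -> ~~ (p%:Z %| b)%Z ->
  a%:~R * P ^ n = b%:~R * P ^ m -> n = m.
Proof.
wlog nm : a b n m / n <= m => [W pa pb E|].
  have [nm|mn] := leP n m; first exact: (W a b n m).
  exact: esym (W b a m n (ltW mn) pb pa (esym E)).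
move=> pa pb E; apply/eqP; rewrite eq_le nm /=; apply: contraNT pa; rewrite -ltNge => nm'.
have mnE : `|m - n|%N = m - n :> int by rewrite gez0_abs // subr_ge0 ltW.
have mn0 : (0 < `|m - n|)%N by rewrite absz_gt0 subr_eq0 gt_eqF.
move/(congr1 ( *%R^~ (P ^ (- n)))): E.
rewrite -!mulrA -!expfzDr ?P_neq0 // subrr expr0z mulr1 -mnE P_exprz_nat -rmorphM /=.
move/intr_inj => ->.
by rewrite -(prednK mn0) exprS mulrCA dvdz_mulr.
Qed.

Lemma padic_abs0 : padic_abs p (0 : R) = 0.
Proof. by rewrite /padic_abs eqxx. Qed.

Lemma padic_absE (a n : int) : ~~ (p%:Z %| a)%Z ->
  padic_abs p (a%:~R * P ^ n) = P ^ (- n).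
Proof.
move=> pa; have a0 : a != 0 by apply: contraNneq pa => ->; rewrite dvdz0.
rewrite /padic_abs mulf_eq0 intr_eq0 (negbTE a0) expfz_eq0 (negbTE P_neq0) andbF /=.
rewrite [X in sup X](_ : _ = [set P ^ (- n)]) ?sup1 //.
apply/seteqP; split => [_ [m [b [pb E]] <-]|_ ->]; last by exists n => //; exists a.
by rewrite (pfactor_exponent_uniq pb pa (esym E)).
Qed.

Lemma inHp_int (z : int) : inHp p (z%:~R : R).
Proof. by exists z, 0%N; rewrite expr0 divr1. Qed.

(* No [inHp] hypothesis is needed: [sup] of a set without supremum is [0]. *)
Lemma padic_abs_ge0 (h : R) : 0 <= padic_abs p h.
Proof.
rewrite /padic_abs; case: eqP => // _; set S := [set _ | _ in _].
have [hS|/sup_out -> //] := pselect (has_sup S).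
have [r Sr] := hS.1; apply: le_trans (ub_le_sup hS.2 Sr).
by have [n _ <-] := Sr; rewrite ltW // exprz_gt0 // P_gt0.
Qed.

Lemma padic_absMX (k : int) (h : R) : inHp p h ->
  padic_abs p (P ^ k * h) = P ^ (- k) * padic_abs p h.
Proof.
move=> Hh; have [->|h0] := eqVneq h 0; first by rewrite mulr0 padic_abs0 mulr0.
have [a [n [pa ->]]] := inHp_pfactor Hh h0.
by rewrite mulrCA -expfzDr ?P_neq0 // !padic_absE // -expfzDr ?P_neq0 // opprD.
Qed.

Lemma padic_abs_int (z : int) : padic_abs p (z%:~R : R) <= 1.
Proof.
have [->|z0] := eqVneq z 0; first by rewrite padic_abs0 ler01.
have [c [v [pc ->]]] := int_pfactor z0.
rewrite rmorphM /= -P_exprz_nat padic_absE // -[1](expr0z P).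
by rewrite ler_eXz2l ?P_gt1 // oppr_le0.
Qed.

Lemma padic_abs_ultra (h1 h2 : R) : inHp p h1 -> inHp p h2 ->
  padic_abs p (h1 + h2) <= Num.max (padic_abs p h1) (padic_abs p h2).
Proof.
move=> H1 H2; have [->|h10] := eqVneq h1 0; first by rewrite add0r le_max lexx orbT.
have [->|h20] := eqVneq h2 0; first by rewrite addr0 le_max lexx.
have [a [n [pa ->]]] := inHp_pfactor H1 h10.
have [b [m [pb ->]]] := inHp_pfactor H2 h20.
wlog nm : a b n m pa pb / n <= m => [W|].
  have [nm|/ltW mn] := leP n m; first exact: (W a b n m).
  by rewrite addrC maxC; apply: (W b a m n).
have mnE : `|m - n|%N = m - n :> int by rewrite gez0_abs // subr_ge0.
have -> : a%:~R * P ^ n + b%:~R * P ^ m = P ^ n * (a + b * p%:Z ^+ `|m - n|)%:~R.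
  rewrite rmorphD rmorphM /= -P_exprz_nat mnE mulrDr mulrCA.
  by congr (_ + _); [exact: mulrC | rewrite -expfzDr ?P_neq0 // subrKC].
rewrite (padic_absMX n); last exact: inHp_int.
rewrite [X in Num.max X _]padic_absE // le_max ler_piMr ?padic_abs_int //.
by rewrite exprz_ge0 // ltW // P_gt0.
Qed.

Lemma padic_abs_lt_int (h : R) : inHp p h -> padic_abs p h < P -> exists z : int, h = z%:~R.
Proof.
move=> Hh; have [->|h0] := eqVneq h 0; first by exists 0.
have [a [n [pa ->]]] := inHp_pfactor Hh h0.
rewrite padic_absE // -[X in _ < X](expr1z P) ltr_eXz2l ?P_gt1 // => n0.
exists (a * p%:Z ^+ `|n|%N).
by rewrite rmorphM /= -P_exprz_nat gez0_abs //; lia.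
Qed.

Lemma P_exprz_decomp x : 0 < x -> exists (k : int) (mu : R), 1 <= mu < P /\ x = P ^ k * mu.
Proof.
move=> x0; have lnP : 0 < ln P by rewrite ln_gt0 // P_gt1.
have := mem_rg1_floor (ln x / ln P); set k := Num.floor _ => /andP [k1 k2].
rewrite ler_pdivlMr // in k1; rewrite ltr_pdivrMr // mulrDl mul1r in k2.
have Pk0 : 0 < P ^ (- k) by rewrite exprz_gt0 // P_gt0.
exists k, (P ^ (- k) * x); split; last first.
  by rewrite mulrA -expfzDr ?P_neq0 // subrr expr0z mul1r.
rewrite -(ler_ln (x := 1)) ?posrE ?mulr_gt0 // -(ltr_ln (y := P)) ?posrE ?mulr_gt0 ?P_gt0 //.
rewrite ln1 lnM ?posrE // ln_exprz ?P_gt0 // rmorphN /= mulNr.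
by rewrite addrC subr_ge0 k1 ltrBlDl.
Qed.

Lemma inK_pw_affine f a b : inK p f -> 0 < a -> a <= b -> pw_affine p f a b.
Proof. by move=> [_ [fPA _]] a0 ab; apply/pw_affineP/fPA. Qed.

Lemma inK_right_affine f x : inK p f -> 0 < x ->
  inHp p (rslope f x) /\ right_affine f x (rslope f x).
Proof.
move=> fK x0; have /pw_affine_right : pw_affine p f x (x + 1).
  by apply: inK_pw_affine => //; lra.
by case/(_ x) => [|h Hh rf]; [rewrite lexx ltrDl ltr01 | rewrite (rslope_right_affine rf)].
Qed.

Lemma inK_left_affine f x : inK p f -> 0 < x -> left_affine f x (lslope f x).
Proof.
move=> fK x0; have /pw_affine_left : pw_affine p f (x / 2) x.
  by apply: inK_pw_affine => //; lra.
by case/(_ x) => [|h lf]; [apply/andP; split; lra | rewrite (lslope_left_affine lf)].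
Qed.

Lemma inK_periodic f (k : int) t : inK p f -> 0 < t -> f (P ^ k * t) = f t.
Proof.
move=> [_ [_ fP]]; have fPn (n : nat) s : 0 < s -> f (P ^+ n * s) = f s.
  elim: n s => [|n IH] s s0; first by rewrite mul1r.
  by rewrite exprS -mulrA fP ?IH // mulr_gt0 // exprn_gt0 // P_gt0.
case: k => n t0; first exact: fPn.
rewrite NegzE -exprnN -[in RHS](mulVKf (expf_neq0 n.+1 P_neq0) t) fPn //.
by rewrite mulr_gt0 // invr_gt0 exprn_gt0 // P_gt0.
Qed.

Lemma rslope_periodic f (k : int) x : inK p f -> 0 < x ->
  rslope f (P ^ k * x) = P ^ (- k) * rslope f x.
Proof.
move=> fK x0; have [_ [b xb A]] := inK_right_affine fK x0.
have Pk0 : 0 < P ^ k by rewrite exprz_gt0 // P_gt0.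
apply: rslope_right_affine; exists (P ^ k * b); first by rewrite ltr_pM2l.
by rewrite -invr_expz; apply: affine_on_dilate => // t t0; exact: inK_periodic.
Qed.

Lemma inK_max f g : inK p f -> inK p g -> inK p (fun t => Num.max (f t) (g t)).
Proof.
move=> fK gK; have [fc [_ fP]] := fK; have [gc [_ gP]] := gK.
split; first by move=> x x0; have := continuous_max (fc x x0) (gc x x0).
split; last by move=> x x0; rewrite fP ?gP.
move=> a b a0 ab; apply/pw_affineP.
exact: pw_affine_max (inK_pw_affine fK a0 ab) (inK_pw_affine gK a0 ab).
Qed.

Lemma inK_shift r f : inK p f -> inK p (fun t => r + f t).
Proof.
move=> fK; have [fc [_ fP]] := fK.
split; first by move=> x x0; apply: continuousD; [exact: cst_continuous | exact: fc].
split; last by move=> x x0; rewrite fP.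
by move=> a b a0 ab; apply/pw_affineP/pw_affine_shift/inK_pw_affine.
Qed.

(** * The norm ||f||_p *)

Definition slope_norm f x := padic_abs p (rslope f x) / x.

Definition normset f := [set r : R | exists lam h : R, 0 < lam /\
  (h = rslope f lam \/ h = lslope f lam) /\ r = padic_abs p h / lam].

Lemma normset_neq0 f : normset f !=set0.
Proof. by exists (padic_abs p (rslope f 1) / 1), 1, (rslope f 1); split=> //; split; [left|]. Qed.

Lemma normset_ubound f M : (forall x, 0 < x -> exists h, left_affine f x h) ->
  (forall x, 0 < x -> slope_norm f x <= M) -> ubound (normset f) M.
Proof.
move=> fL fM _ [x [h [x0 [[->|->] ->]]]]; first exact: fM.
have [h' lf] := fL x x0; rewrite (lslope_left_affine lf).
have [m mx Hm] := left_affine_rslope lf.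
have mu0 : 0 < Num.max m (x / 2) by rewrite lt_max divr_gt0 ?orbT.
have mux : Num.max m (x / 2) < x by rewrite gt_max mx /=; lra.
apply: le_trans (fM _ mu0); rewrite /slope_norm Hm ?le_max ?lexx ?mux //.
by apply: ler_wpM2l; [exact: padic_abs_ge0 | rewrite lef_pV2 ?posrE // ltW].
Qed.

Lemma normp_le f M : (forall x, 0 < x -> exists h, left_affine f x h) ->
  (forall x, 0 < x -> slope_norm f x <= M) -> normp p f <= M.
Proof. by move=> fL fM; apply: ge_sup (normset_neq0 f) (normset_ubound fL fM). Qed.

Lemma slope_norm_le_normp f M x : (forall x, 0 < x -> exists h, left_affine f x h) ->
  (forall x, 0 < x -> slope_norm f x <= M) -> 0 < x -> slope_norm f x <= normp p f.
Proof.
move=> fL fM x0; apply: ub_le_sup; first by exists M; exact: normset_ubound.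
by exists x, (rslope f x); split => //; split; [left|].
Qed.

Lemma slope_norm_periodic f (k : int) x : inK p f -> 0 < x ->
  slope_norm f (P ^ k * x) = slope_norm f x.
Proof.
move=> fK x0; have [Hf _] := inK_right_affine fK x0.
rewrite /slope_norm rslope_periodic // (padic_absMX (- k)) // opprK invfM mulrACA.
by rewrite mulfV ?mul1r // expfz_neq0 ?P_neq0.
Qed.

Lemma inK_slope_norm_bounded f : inK p f -> exists M, forall x, 0 < x -> slope_norm f x <= M.
Proof.
move=> fK; have [M HM] := pw_affine_rslope_bound (inK_pw_affine fK ltr01 (ltW P_gt1)).
exists M => x x0; have [k [mu [/andP [mu1 muP] ->]]] := P_exprz_decomp x0.
have mu0 : 0 < mu := lt_le_trans ltr01 mu1.
have HMmu : padic_abs p (rslope f mu) <= M by apply: HM; rewrite mu1 muP.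
rewrite slope_norm_periodic // /slope_norm ler_pdivrMr // (le_trans HMmu) //.
by rewrite ler_peMr // (le_trans (padic_abs_ge0 _) HMmu).
Qed.

Lemma inK_slope_norm_le_normp f x : inK p f -> 0 < x -> slope_norm f x <= normp p f.
Proof.
move=> fK x0; have [M fM] := inK_slope_norm_bounded fK.
by apply: slope_norm_le_normp fM x0 => y y0; exists (lslope f y); exact: inK_left_affine.
Qed.

Lemma normp_max f g : inK p f -> inK p g ->
  normp p (fun t => Num.max (f t) (g t)) <= Num.max (normp p f) (normp p g).
Proof.
move=> fK gK; have MK := inK_max fK gK; set M := fun t => _ in MK *.
apply: normp_le => [x x0|x x0]; first by exists (lslope M x); exact: inK_left_affine.
have [_ rM] := inK_right_affine MK x0.
have [_ rf] := inK_right_affine fK x0; have [_ rg] := inK_right_affine gK x0.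
have Mfg t : Num.max (f t) (g t) = f t \/ Num.max (f t) (g t) = g t.
  by rewrite maxEle; case: ifP; [right | left].
have [E|E] := right_affine_pick Mfg rf rg rM; rewrite /slope_norm E -/(slope_norm _ x).
  by rewrite le_max inK_slope_norm_le_normp.
by rewrite le_max inK_slope_norm_le_normp ?orbT.
Qed.

Lemma normp_add f g : inK p f -> inK p g ->
  normp p (fun t => f t + g t) <= Num.max (normp p f) (normp p g).
Proof.
move=> fK gK; apply: normp_le => x x0.
  by exists (lslope f x + lslope g x); apply: left_affineD; exact: inK_left_affine.
have [Hf rf] := inK_right_affine fK x0; have [Hg rg] := inK_right_affine gK x0.
have ultra : slope_norm (fun t => f t + g t) x <= Num.max (slope_norm f x) (slope_norm g x).
  rewrite /slope_norm (rslope_right_affine (right_affineD rf rg)) -maxr_pMl ?invr_ge0 ?(ltW x0) //.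
  by rewrite ler_wpM2r ?invr_ge0 ?(ltW x0) // padic_abs_ultra.
exact: le_trans ultra (le_max2 (inK_slope_norm_le_normp fK x0) (inK_slope_norm_le_normp gK x0)).
Qed.

Lemma slope_norm_scale f (a : int) x : inK p f -> 0 < x ->
  slope_norm (fun t => P ^ a * f t) x = P ^ (- a) * slope_norm f x.
Proof.
move=> fK x0; have [Hf rf] := inK_right_affine fK x0.
by rewrite /slope_norm (rslope_right_affine (right_affineZ (P ^ a) rf)) (padic_absMX a) // mulrA.
Qed.

Lemma normp_scale f (a : int) : inK p f ->
  normp p (fun t => P ^ a * f t) = P ^ (- a) * normp p f.
Proof.
move=> fK; set F := fun t => _.
have PaE : P ^ a * P ^ (- a) = 1 by rewrite -expfzDr ?P_neq0 // subrr expr0z.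
have Pa0 (b : int) : 0 < P ^ b by rewrite exprz_gt0 // P_gt0.
have FL x : 0 < x -> exists h, left_affine F x h.
  by move=> x0; exists (P ^ a * lslope f x); exact/left_affineZ/inK_left_affine.
have FM x : 0 < x -> slope_norm F x <= P ^ (- a) * normp p f.
  by move=> x0; rewrite slope_norm_scale // ler_pM2l // inK_slope_norm_le_normp.
apply/eqP; rewrite eq_le; apply/andP; split; first exact: normp_le FL FM.
rewrite -invr_expz ler_pdivrMl //.
apply: normp_le => [x x0|x x0]; first by exists (lslope f x); exact: inK_left_affine.
have -> : slope_norm f x = P ^ a * slope_norm F x.
  by rewrite slope_norm_scale // mulrA PaE mul1r.
by rewrite ler_pM2l // (slope_norm_le_normp FL FM x0).
Qed.

Lemma normp_le1 f : inK p f -> normp p f <= 1 <->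
  (forall lam, 1 <= lam < P -> exists z : int, rslope f lam = z%:~R) /\
  (forall lam, 1 < lam <= P -> exists z : int, lslope f lam = z%:~R).
Proof.
move=> fK; split => [N1|[fR _]].
  have rint x : 0 < x -> x < P -> exists z : int, rslope f x = z%:~R.
    move=> x0 xP; have [Hf _] := inK_right_affine fK x0; apply: padic_abs_lt_int Hf _.
    have := le_trans (inK_slope_norm_le_normp fK x0) N1.
    by rewrite /slope_norm ler_pdivrMr // mul1r => /le_lt_trans; apply.
  split=> x /andP [x1 xP]; first exact: rint (lt_le_trans ltr01 x1) xP.
  have [m mx Hm] := left_affine_rslope (inK_left_affine fK (lt_trans ltr01 x1)).
  rewrite -(Hm (Num.max m 1)); last by rewrite le_max lexx gt_max mx x1.
  apply: rint; first by rewrite lt_max ltr01 orbT.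
  by rewrite gt_max (lt_le_trans mx xP) (lt_le_trans x1 xP).
apply: normp_le => [x x0|x x0]; first by exists (lslope f x); exact: inK_left_affine.
have [k [mu [/andP [mu1 muP] ->]]] := P_exprz_decomp x0.
have mu0 : 0 < mu := lt_le_trans ltr01 mu1.
rewrite slope_norm_periodic // /slope_norm ler_pdivrMr // mul1r.
have [z ->] := fR mu (introT andP (conj mu1 muP)).
exact: le_trans (padic_abs_int z) mu1.
Qed.

(** * The filtration of H^0(D) *)

Lemma normp_shift r f : normp p (fun t => r + f t) = normp p f.
Proof. by rewrite /normp rslope_shift lslope_shift. Qed.

Lemma pdiv_max_ge f g x : inK p f -> inK p g -> 0 < x -> g x <= f x ->
  Defs.pdiv f x <= Defs.pdiv (fun t => Num.max (f t) (g t)) x.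
Proof.
move=> fK gK x0 gf; have MK := inK_max fK gK; set M := fun t => _ in MK *.
have fM t : f t <= M t by rewrite /M le_max lexx.
have Mx : M x = f x by rewrite /M max_l.
have [_ rf] := inK_right_affine fK x0; have [_ rM] := inK_right_affine MK x0.
have lf := inK_left_affine fK x0; have lM := inK_left_affine MK x0.
rewrite /Defs.pdiv (hplus_right_affine x0 rf) (hplus_right_affine x0 rM).
rewrite (hminus_left_affine x0 lf) (hminus_left_affine x0 lM) -!mulrBl ler_pM2r //.
apply: lerB.
  have [b xb [Af AM]] := right_affine2 rf rM.
  by apply: affine_on_slope_le xb Af AM _; rewrite Mx lerD2r.
have [a ax [AM Af]] := left_affine2 lM lf.
by apply: affine_on_slope_le ax AM Af _; rewrite Mx lerD2l lerN2.
Qed.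

Lemma pdiv_max f g x : inK p f -> inK p g -> 0 < x ->
  Defs.pdiv f x <= Defs.pdiv (fun t => Num.max (f t) (g t)) x \/
  Defs.pdiv g x <= Defs.pdiv (fun t => Num.max (f t) (g t)) x.
Proof.
move=> fK gK x0; have [gf|/ltW fg] := leP (g x) (f x); first by left; exact: pdiv_max_ge.
right; rewrite (_ : (fun t => _) = fun t => Num.max (g t) (f t)); first exact: pdiv_max_ge.
by apply/funext => t; rewrite maxC.
Qed.

Lemma H0rho_join D rho u v : H0rho p D rho u -> H0rho p D rho v -> H0rho p D rho (Kjoin u v).
Proof.
case: u v => [f|] [g|] //= [[fK fD] fN] [[gK gD] gN]; split; first split.
- exact: inK_max.
- move=> x x0; have [le|le] := pdiv_max fK gK x0.
    by apply: le_trans (fD x x0) _; rewrite lerD2l.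
  by apply: le_trans (gD x x0) _; rewrite lerD2l.
- by apply: le_trans (normp_max fK gK) _; rewrite ge_max fN gN.
Qed.

Lemma H0rho_act D rho (c : Rmax R) u : H0rho p D rho u -> H0rho p D rho (Kact c u).
Proof.
case: c u => [r|] [f|] //= [[fK fD] fN]; split; first split.
- exact: inK_shift.
- by move=> x x0; rewrite pdiv_shift; exact: fD.
- by rewrite normp_shift.
Qed.

Lemma H0rho_submodule D rho : Rmax_submodule (H0rho p D rho).
Proof. by split=> //; split=> [u v|c u]; [exact: H0rho_join | exact: H0rho_act]. Qed.

Lemma H0rho_le D rho rho' : rho <= rho' -> H0rho p D rho `<=` H0rho p D rho'.
Proof. by move=> le [f|] //= [Hf fN]; split => //; exact: le_trans fN le. Qed.

Lemma H0rho_sub D rho : H0rho p D rho `<=` H0 p D.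
Proof. by case=> [f [Hf _]|]. Qed.

Lemma H0_H0rho D u : H0 p D u -> exists2 rho, 0 < rho & H0rho p D rho u.
Proof.
case: u => [f Hf|_]; last by exists 1.
by exists (Num.max 1 (normp p f)); rewrite ?lt_max ?ltr01 //; split; rewrite // le_max lexx orbT.
Qed.

End PadicNorm.

Theorem proposition5p15 (R : realType) (p : nat) (hp : prime p) :
  (forall f g : R -> R, inK p f -> inK p g ->
     (* (i) *)
     normp p (fun t => Num.max (f t) (g t)) <= Num.max (normp p f) (normp p g) /\
     (* (ii) *)
     normp p (fun t => f t + g t) <= Num.max (normp p f) (normp p g) /\
     (* (iii) *)
     (forall a : int, normp p (fun t => (p%:R : R) ^ a * f t) = (p%:R : R) ^ (- a) * normp p f) /\
     (* (iv) *)
     (normp p f <= 1 <->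
        (forall lam : R, 1 <= lam < p%:R -> exists z : int, rslope f lam = z%:~R) /\
        (forall lam : R, 1 < lam <= p%:R -> exists z : int, lslope f lam = z%:~R))) /\
  (* (v) *)
  (forall D : set R -> R, isDiv p D ->
     (forall rho : R, 0 < rho -> Rmax_submodule (H0rho p D rho)) /\
     (forall rho rho' : R, 0 < rho -> rho <= rho' -> H0rho p D rho `<=` H0rho p D rho') /\
     (forall rho : R, 0 < rho -> H0rho p D rho `<=` H0 p D) /\
     (forall x, H0 p D x -> exists rho : R, 0 < rho /\ H0rho p D rho x)).
Proof.
split=> [f g fK gK | D _].
  split; first exact: normp_max.
  split; first exact: normp_add.
  by split; [move=> a; exact: normp_scale | exact: normp_le1].
split; first by move=> rho _; exact: H0rho_submodule.
split; first by move=> rho rho' _; exact: H0rho_le.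
split; first by move=> rho _; exact: H0rho_sub.
by move=> u /H0_H0rho [rho rho0 Hu]; exists rho.
Qed.
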